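(* There exist an alphabet $A$ and words $\mathbf a,\mathbf c\in A^\ast$ such that $\mathbf a:\mathbf a^r::_m\mathbf c:\mathbf c^r$ does not hold in $(A^\ast,\cdot,A^\ast)$.
   Context: The reverse of a word $\mathbf a=a_1\ldots a_n$ is $\mathbf a^r:=a_n\ldots a_1$. $(A^\ast,\cdot,A^\ast)$ is the algebra whose universe is the set $A^\ast$ of all finite words over $A$ (including the empty word), with concatenation and every word as a constant. A justification is a pair of terms $s\to t$ with the variables of $t$ among those of $s$; monolinear justifications are those where $s,t$ contain only one fixed variable $x$, occurring at most once in $s$ and at most once in $t$. $\uparrow^m(\mathbf a\to\mathbf b)$ is the set of monolinear justifications $s\to t$ with $\mathbf a=s(\mathbf o)$, $\mathbf b=t(\mathbf o)$ for some value $\mathbf o$; $\uparrow^m(\mathbf a\to\mathbf b:\!\cdot\,\mathbf c\to\mathbf d):=\uparrow^m(\mathbf a\to\mathbf b)\cap\uparrow^m(\mathbf c\to\mathbf d)$. A monolinear justification is trivial if it lies in all sets $\uparrow^m(\mathbf a'\to\mathbf b':\!\cdot\,\mathbf c'\to\mathbf d')$. $\mathbf a\to\mathbf b:\!\cdot_m\,\mathbf c\to\mathbf d$ holds iff either (i) all justifications in $\uparrow^m(\mathbf a\to\mathbf b)\cup\uparrow^m(\mathbf c\to\mathbf d)$ are trivial, or (ii) $J_{\mathbf d}:=\uparrow^m(\mathbf a\to\mathbf b:\!\cdot\,\mathbf c\to\mathbf d)$ contains a non-trivial justification and for every $\mathbf d'$, $J_{\mathbf d}\subseteq J_{\mathbf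 d'}$ implies $J_{\mathbf d'}$ contains a non-trivial justification and $J_{\mathbf d'}\subseteq J_{\mathbf d}$ (ignoring trivial justifications). $\mathbf a:\mathbf b::_m\mathbf c:\mathbf d$ iff $\mathbf a\to\mathbf b:\!\cdot_m\,\mathbf c\to\mathbf d$, $\mathbf b\to\mathbf a:\!\cdot_m\,\mathbf d\to\mathbf c$, $\mathbf c\to\mathbf d:\!\cdot_m\,\mathbf a\to\mathbf b$, $\mathbf d\to\mathbf c:\!\cdot_m\,\mathbf b\to\mathbf a$ all hold. *)

From mathcomp Require Import all_boot.
Set Implicit Arguments.
Unset Strict Implicit.
Unset Printing Implicit Defensive.

Section Analogy.
Variable A : finType.

(* Terms of the algebra (A-star, concatenation, all words as constants) in the single fixed variable x:
   the variable, a constant (any word, including the empty one),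
   or a concatenation of two terms. *)
Inductive term : Type :=
| tvar : term
| tcst : seq A -> term
| tcat : term -> term -> term.

Fixpoint teval (t : term) (o : seq A) : seq A :=
  match t with
  | tvar => o
  | tcst w => w
  | tcat t1 t2 => teval t1 o ++ teval t2 o
  end.

Fixpoint occ (t : term) : nat :=
  match t with
  | tvar => 1
  | tcst _ => 0
  | tcat t1 t2 => occ t1 + occ t2
  end.

Definition justif := (term * term)%type.

Definition monolinear (j : justif) : Prop :=
  occ j.1 <= 1 /\ occ j.2 <= 1 /\ (0 < occ j.2 -> 0 < occ j.1).

Definition upm (a b : seq A) (j : justif) : Prop :=
  monolinear j /\ exists o, teval j.1 o = a /\ teval j.2 o = b.

Definition upm2 (a b c d : seq A) (j : justif) : Prop :=
  upm a b j /\ upm c d j.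

Definition trivial_just (j : justif) : Prop :=
  monolinear j /\ forall a' b' c' d', upm2 a' b' c' d' j.

Definition nt_subset (P Q : justif -> Prop) : Prop :=
  forall j, P j -> ~ trivial_just j -> Q j.

Definition has_nontrivial (P : justif -> Prop) : Prop :=
  exists j, P j /\ ~ trivial_just j.

Definition arrow_m (a b c d : seq A) : Prop :=
  (forall j, (upm a b j \/ upm c d j) -> trivial_just j)
  \/ (has_nontrivial (upm2 a b c d) /\
      forall d' : seq A,
        nt_subset (upm2 a b c d) (upm2 a b c d') ->
        has_nontrivial (upm2 a b c d') /\
        nt_subset (upm2 a b c d') (upm2 a b c d)).

Definition analogy_m (a b c d : seq A) : Prop :=
  [/\ arrow_m a b c d, arrow_m b a d c, arrow_m c d a b & arrow_m d c b a].

End Analogy.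

(** A monolinear term evaluates either to a constant or to [u ++ o ++ v] with
    [u], [v] fixed; if it sends some value to the empty word, it is therefore
    the constant [[::]] or the bare variable.  So every justification of
    [[::] -> [::]] maps a word [c] to [[::]] or to [c] itself, and none maps
    [ab] to [ba].  On the other hand [x -> [::]] justifies [[::] -> [::]]
    without being trivial.  Hence [[::] -> [::] :._m ab -> ba] fails on both
    counts, and [[::] : [::] ::_m ab : ba] does not hold. *)

From mathcomp Require Import all_boot.

Set Implicit Arguments.
Unset Strict Implicit.
Unset Printing Implicit Defensive.

Section MonolinearTerms.
Variable A : finType.
Implicit Types (t : term A) (o u v : seq A).

Lemma teval_occ0 t o o' : occ t = 0 -> teval t o = teval t o'.
Proof.
elim: t => [|w|t1 IH1 t2 IH2] //= /eqP; rewrite addn_eq0 => /andP[/eqP h1 /eqP h2].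
by rewrite (IH1 h1) (IH2 h2).
Qed.

Lemma teval_occ1 t : occ t = 1 -> exists u v, forall o, teval t o = u ++ o ++ v.
Proof.
elim: t => [|w|t1 IH1 t2 IH2] //=; first by exists [::], [::] => o; rewrite cats0.
case E1: (occ t1) => [|[|//]]; case E2: (occ t2) => [|[|//]] //= _.
- have [u [v Ev]] := IH2 E2.
  by exists (teval t1 [::] ++ u), v => o; rewrite Ev (teval_occ0 o [::] E1) catA.
- have [u [v Ev]] := IH1 E1.
  by exists u, (v ++ teval t2 [::]) => o; rewrite Ev (teval_occ0 o [::] E2) -!catA.
Qed.

Lemma teval_eq_nil t o o' : occ t <= 1 -> teval t o = [::] ->
  teval t o' = if occ t == 0 then [::] else o'.
Proof.
case: (occ t =P 0) => [t0 _|/eqP tn0 t_le1]; first by rewrite (teval_occ0 o' o t0).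
have /teval_occ1[u [v Ev]] : occ t = 1 by apply/eqP; rewrite eqn_leq t_le1 lt0n.
rewrite !Ev => /nilP; rewrite !cat_nilp => /and3P[/nilP-> _ /nilP->].
by rewrite cats0.
Qed.

End MonolinearTerms.

Section EmptyWordAnalogy.
Variable A : finType.
Implicit Types (c d : seq A) (j : justif A).

Lemma upm_nil_nil c d j : upm [::] [::] j -> upm c d j -> d = [::] \/ d = c.
Proof.
case: j => s t [[s_le1 [t_le1 t_s]] [o /= [so to]]] [_ [o' /= [<- <-]]].
rewrite (teval_eq_nil o' t_le1 to); case: eqP => [_|/eqP]; first by left.
rewrite -lt0n => /t_s /lt0n_neq0 /negbTE sN0.
by rewrite (teval_eq_nil o' s_le1 so) sN0; right.
Qed.

Lemma upm_var_to_nil : upm [::] [::] (tvar A, tcst [::]).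
Proof. by split; [|exists [::]]. Qed.

Lemma var_to_nil_nontrivial (x : A) : ~ trivial_just (tvar A, tcst [::]).
Proof. by case=> _ /(_ [::] [:: x] [::] [::]) [[_ [o [_ /=]]]]. Qed.

Lemma not_arrow_m_nil_nil c d : d != [::] -> d != c -> ~ arrow_m [::] [::] c d.
Proof.
case: d => [//|x d] _ dNc [all_trivial | [[j [[j_nil j_cd] _]] _]].
  exact: (var_to_nil_nontrivial x) (all_trivial _ (or_introl upm_var_to_nil)).
by case: (upm_nil_nil j_nil j_cd) => // dc; rewrite dc eqxx in dNc.
Qed.

End EmptyWordAnalogy.

Theorem mainTheorem14 :
  exists (A : finType) (a c : seq A),
    ~ analogy_m a (rev a) c (rev c).
Proof.
exists (bool : finType), [::], [:: true; false].
by case=> + _ _ _; apply: not_arrow_m_nil_nil.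
Qed.
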